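(* Let $m\ge0$ and $n\ge0$ be integers. Then $r_n(q^{2m+1},q^2)$ is divisible by $(-q;q)_n$ and $r_n(-q^m,q)$ is divisible by $(q;q^2)_{\lfloor (n+1)/2\rfloor}$ in $\mathbb{Z}[q]$. More precisely, $$f(n,q^{2m+1},q)=\sum_{j=0}^m(-1)^jq^{j^2}\begin{bmatrix} m\\ j\end{bmatrix}_{q^2}(q^{n-j+1};q)_j\in\mathbb{Z}[q],$$ $$F(2n,q^m,q)=\sum_{k=0}^{\lfloor m/2\rfloor}q^{\binom{2k}{2}}\begin{bmatrix} m\\ 2k\end{bmatrix}_q(q^{2n-2k+2};q^2)_k\in\mathbb{Z}[q],$$ $$F(2n+1,q^m,q)=\sum_{k=0}^{\lfloor (m-1)/2\rfloor}q^{\binom{2k+1}{2}}\begin{bmatrix} m\\ 2k+1\end{bmatrix}_q(q^{2n-2k+2};q^2)_k\in\mathbb{Z}[q].$$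
   Context: $q$ is an indeterminate. $(x;q)_n=\prod_{j=0}^{n-1}(1-q^jx)$. The Gaussian binomial coefficient is $\begin{bmatrix} n\\ j\end{bmatrix}_q=\frac{(q;q)_n}{(q;q)_j(q;q)_{n-j}}$ for $0\le j\le n$ and $0$ otherwise. $r_n(s,q)=\sum_{j=0}^n\begin{bmatrix} n\\ j\end{bmatrix}_q s^j$ (Rogers–Szegö polynomials). The normalized Rogers–Szegö polynomials are $f(n,s,q)=\dfrac{\sum_{j=0}^n s^j\begin{bmatrix} n\\ j\end{bmatrix}_{q^2}}{(-q;q)_n}=\dfrac{r_n(s,q^2)}{(-q;q)_n}$ and $F(n,s,q)=\dfrac{\sum_{j=0}^n(-s)^j\begin{bmatrix} n\\ j\end{bmatrix}_{q}}{(q;q^2)_{\lfloor (n+1)/2\rfloor}}=\dfrac{r_n(-s,q)}{(q;q^2)_{\lfloor (n+1)/2\rfloor}}$. An empty sum is $0$. *)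

From HB Require Import structures.
From mathcomp Require Import all_boot all_order all_algebra.
Set Implicit Arguments. Unset Strict Implicit. Unset Printing Implicit Defensive.
Import Order.TTheory GRing.Theory Num.Theory.
Local Open Scope ring_scope.

Definition qpoch (a x : {poly int}) (n : nat) : {poly int} :=
  \prod_(j < n) (1 - x ^+ j * a).

(* Gaussian binomial coefficient [n j]_x = (x;x)_n / ((x;x)_j (x;x)_{n-j})
   for 0 <= j <= n and 0 otherwise (exact division in Z[q]; the
   denominator has leading coefficient +-1). *)
Definition qbin (x : {poly int}) (n j : nat) : {poly int} :=
  if (j <= n)%N then
    qpoch x x n %/ (qpoch x x j * qpoch x x (n - j))
  else 0.

Definition rs (n : nat) (s x : {poly int}) : {poly int} :=
  \sum_(j < n.+1) qbin x n j * s ^+ j.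

From HB Require Import structures.
From mathcomp Require Import all_boot all_order all_algebra.
From mathcomp Require Import ring zify.
Set Implicit Arguments. Unset Strict Implicit. Unset Printing Implicit Defensive.
Import Order.TTheory GRing.Theory Num.Theory.
Local Open Scope ring_scope.

(* The Rogers-Szegö polynomials satisfy
     r_{n+1}(x s, x) = r_{n+1}(s, x) - s (1 - x^{n+1}) r_n(s, x)
   (q-Pascal and q-absorption), and hence a three-term recurrence in n.  For
   x = q^2, s = q^{2m+1} and for x = q, s = -q^m the first identity is a
   recurrence in m, which the right-hand sums satisfy as well by q-Pascal; this
   reduces everything to m = 0, where the three-term recurrence gives
   r_n(q, q^2) = (-q;q)_n and Gauss' r_{2n}(-1, q) = (q;q^2)_n,
   r_{2n+1}(-1, q) = 0.  Divisibility holds because the sums lie in Z[q]. *)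

Lemma qpoch0 (a x : {poly int}) : qpoch a x 0 = 1.
Proof. by rewrite /qpoch big_ord0. Qed.

Lemma qpochS (a x : {poly int}) n : qpoch a x n.+1 = qpoch a x n * (1 - x ^+ n * a).
Proof. by rewrite /qpoch big_ord_recr. Qed.

Lemma qpoch1_eq0 (x : {poly int}) n : qpoch 1 x n.+1 = 0.
Proof. by rewrite /qpoch big_ord_recl expr0 mulr1 subrr mul0r. Qed.

Lemma qpoch_expS (y : {poly int}) c k :
  qpoch (y ^+ (c - k)) y k.+1 = qpoch (y ^+ (c - k)) y k * (1 - y ^+ c).
Proof.
rewrite qpochS; have [le_kc | lt_ck] := leqP k c; first by rewrite -exprD subnKC.
have -> : (c - k = 0)%N by lia.
by case: k lt_ck => // k _; rewrite expr0 qpoch1_eq0 !mul0r.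
Qed.

Lemma sum_ord_widen_vanish (V : nmodType) a N (F : nat -> V) :
  (a <= N)%N -> (forall j, (a <= j)%N -> F j = 0) ->
  \sum_(j < a) F j = \sum_(j < N) F j.
Proof.
move=> leaN F0; rewrite (big_ord_widen _ _ leaN) big_mkcond /=.
by apply: eq_bigr => j _; case: ltnP => // /F0 ->.
Qed.

Fixpoint qbinom (x : {poly int}) (n j : nat) : {poly int} :=
  match n, j with
  | _, 0 => 1
  | 0, _.+1 => 0
  | n.+1, j.+1 => qbinom x n j + x ^+ j.+1 * qbinom x n j.+1
  end.

Section GaussianBinomial.

Variable x : {poly int}.
Local Notation qb := (qbinom x).
Local Notation qfac n := (qpoch x x n).

Lemma qbinom_n0 n : qb n 0 = 1.
Proof. by case: n. Qed.

Lemma qbinom_gt n j : (n < j)%N -> qb n j = 0.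
Proof.
elim: n j => [|n IH] [|j] //= lt_nj.
by rewrite !IH ?mulr0 ?addr0 // ltnW.
Qed.

Lemma qbinom_qfac n j : (j <= n)%N -> qb n j * (qfac j * qfac (n - j)) = qfac n.
Proof.
elim: n j => [|n IH] [|j] //= le_jn; rewrite ?qpoch0 ?mul1r ?mulr1 //.
rewrite subSS mulrDl.
have E1 : qb n j * (qfac j.+1 * qfac (n - j)) = qfac n * (1 - x ^+ j.+1).
  by rewrite qpochS -(IH j) // exprSr; ring.
have E2 : x ^+ j.+1 * qb n j.+1 * (qfac j.+1 * qfac (n - j))
          = qfac n * (x ^+ j.+1 - x ^+ n.+1).
  have [lt_jn | le_nj] := ltnP j n; last first.
    have -> : n = j by lia.
    by rewrite qbinom_gt // subrr !mulr0 mul0r.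
  have -> : (n - j = (n - j.+1).+1)%N by lia.
  have Exn : x ^+ n.+1 = x ^+ j.+1 * (x ^+ (n - j.+1) * x).
    by rewrite -exprSr -exprD; congr (_ ^+ _); lia.
  by rewrite (qpochS x x (n - j.+1)) -(IH j.+1) // Exn; ring.
by rewrite E1 E2 qpochS -exprSr; ring.
Qed.

(* Makes the pseudo-division defining [qbin] exact. *)
Hypothesis lead_unit : forall i, lead_coef (1 - x ^+ i.+1) \is a GRing.unit.

Lemma qfac2_lead_unit j k : lead_coef (qfac j * qfac k) \is a GRing.unit.
Proof.
suff qfac_unit n : lead_coef (qfac n) \is a GRing.unit.
  by rewrite lead_coefM unitrM !qfac_unit.
elim: n => [|n IH]; first by rewrite qpoch0 lead_coef1 unitr1.
by rewrite qpochS lead_coefM unitrM IH -exprSr lead_unit.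
Qed.

Lemma qbinE n j : qbin x n j = qb n j.
Proof.
rewrite /qbin; case: leqP => [le_jn | lt_nj]; last by rewrite qbinom_gt.
by rewrite -(qbinom_qfac le_jn) Pdiv.IdomainUnit.mulpK // qfac2_lead_unit.
Qed.

Lemma qbinom_unique n j p :
  (j <= n)%N -> p * (qfac j * qfac (n - j)) = qfac n -> qb n j = p.
Proof.
move=> le_jn; rewrite -(qbinom_qfac le_jn) => /mulIf-> //.
by apply: contraTneq (qfac2_lead_unit j (n - j)) => ->; rewrite lead_coef0 unitr0.
Qed.

Lemma qbinom_dual_pascal n j : qb n.+1 j.+1 = x ^+ (n - j) * qb n j + qb n j.+1.
Proof.
have [le_jn | lt_nj] := leqP j n; last by rewrite !qbinom_gt ?mulr0 ?addr0 //; lia.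
apply: qbinom_unique => //; rewrite subSS mulrDl -mulrA.
have E1 : qb n j * (qfac j.+1 * qfac (n - j)) = qfac n * (1 - x ^+ j.+1).
  by rewrite qpochS -(qbinom_qfac le_jn) -exprSr; ring.
have E2 : qb n j.+1 * (qfac j.+1 * qfac (n - j)) = qfac n * (1 - x ^+ (n - j)).
  have [lt_jn | le_nj] := ltnP j n; last first.
    have -> : n = j by lia.
    by rewrite qbinom_gt // subnn expr0 subrr mulr0 mul0r.
  have -> : (n - j = (n - j.+1).+1)%N by lia.
  by rewrite (qpochS x x (n - j.+1)) -(qbinom_qfac lt_jn) -exprSr; ring.
have Exn : x ^+ n * x = x ^+ (n - j) * x ^+ j.+1.
  by rewrite -exprSr -exprD; congr (_ ^+ _); lia.
by rewrite E1 E2 qpochS Exn; ring.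
Qed.

Lemma qbinom_absorb n j : qb n.+1 j.+1 * (1 - x ^+ j.+1) = (1 - x ^+ n.+1) * qb n j.
Proof.
have [le_jn | lt_nj] := leqP j n; last by rewrite !qbinom_gt ?mulr0 ?mul0r //; lia.
have Exn : x ^+ n.+1 = x ^+ j.+1 * x ^+ (n - j) by rewrite -exprD; congr (_ ^+ _); lia.
have pascal : qb n.+1 j.+1 = qb n j + x ^+ j.+1 * qb n j.+1 by [].
by rewrite mulrBr mulr1 {1}pascal qbinom_dual_pascal Exn; ring.
Qed.

Lemma rsE n N s : (n < N)%N -> rs n s x = \sum_(j < N) qb n j * s ^+ j.
Proof.
move=> ltnN; rewrite /rs (eq_bigr (fun j : 'I_n.+1 => qb n j * s ^+ j)).
  apply: (sum_ord_widen_vanish (F := fun j => qb n j * s ^+ j)) => // j ltnj.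
  by rewrite qbinom_gt ?mul0r.
by move=> j _; rewrite qbinE.
Qed.

Lemma rs_scale n s :
  rs n.+1 (x * s) x = rs n.+1 s x - s * (1 - x ^+ n.+1) * rs n s x.
Proof.
rewrite (rsE (x * s) (ltnSn n.+1)) (rsE s (ltnSn n.+1)) (rsE s (ltnSn n)).
rewrite !(big_ord_recl n.+1) !expr0 mulr_sumr -addrA -sumrB.
congr (_ + _); apply: eq_bigr => j _; rewrite lift0.
have -> : s * (1 - x ^+ n.+1) * (qb n j * s ^+ j) = (1 - x ^+ n.+1) * qb n j * s ^+ j.+1.
  by rewrite (exprS s j); ring.
by rewrite -qbinom_absorb exprMn; ring.
Qed.

Lemma rs_split n s : rs n.+1 s x = s * rs n s x + rs n (x * s) x.
Proof.
rewrite (rsE s (ltnSn n.+1)) (rsE s (ltnSn n)) (rsE (x * s) (ltnW (ltnSn n.+1))).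
rewrite !(big_ord_recl n.+1) !qbinom_n0 !expr0 mulr_sumr addrCA -big_split.
congr (_ + _); apply: eq_bigr => j _.
by rewrite lift0 /= !exprS exprMn; ring.
Qed.

Lemma rs_rec n s :
  rs n.+2 s x = (1 + s) * rs n.+1 s x - s * (1 - x ^+ n.+1) * rs n s x.
Proof. by rewrite rs_split rs_scale; ring. Qed.

Lemma rs_eq_rec s (u : nat -> {poly int}) :
  u 0%N = 1 -> u 1%N = 1 + s ->
  (forall n, u n.+2 = (1 + s) * u n.+1 - s * (1 - x ^+ n.+1) * u n) ->
  forall n, rs n s x = u n.
Proof.
move=> u0 u1 uS; suff rs_u n : rs n s x = u n /\ rs n.+1 s x = u n.+1.
  by move=> n; case: (rs_u n).
elim: n => [|n [IHn IHSn]]; last by split=> //; rewrite rs_rec uS IHn IHSn.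
rewrite (rsE _ (ltnSn 0)) (rsE _ (ltnSn 1)) !big_ord_recl !big_ord0 u0 u1 /=.
by rewrite /bump /= mulr0 !addr0 expr0 expr1; split; ring.
Qed.

End GaussianBinomial.

Lemma Xn_lead_unit k i : (0 < k)%N ->
  lead_coef (1 - ('X ^+ k) ^+ i.+1 : {poly int}) \is a GRing.unit.
Proof.
move=> k_gt0; rewrite -exprM -opprB -polyC1 lead_coefN lead_coefXnsubC ?unitrN1 //.
by rewrite muln_gt0 k_gt0.
Qed.

Lemma X_lead_unit i : lead_coef (1 - 'X ^+ i.+1 : {poly int}) \is a GRing.unit.
Proof. by rewrite -[X in X ^+ i.+1]expr1 Xn_lead_unit. Qed.

Lemma X2_lead_unit i : lead_coef (1 - ('X ^+ 2) ^+ i.+1 : {poly int}) \is a GRing.unit.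
Proof. exact: Xn_lead_unit. Qed.

Lemma rs_neg1 n : rs n (-1) 'X = if odd n then 0 else qpoch 'X ('X ^+ 2) n./2.
Proof.
pose u n := if odd n then 0 else qpoch 'X ('X ^+ 2) n./2.
apply: (rs_eq_rec X_lead_unit (u := u)) => [||k]; rewrite /u /= ?qpoch0 ?subrr //.
rewrite negbK mul0r sub0r mulN1r mulNr opprK; case: ifP => [|even_k]; first by rewrite mulr0.
have Ek : 'X ^+ k.+1 = ('X ^+ 2) ^+ k./2 * 'X :> {poly int}.
  rewrite -exprM -exprSr; congr (_ ^+ _).
  by move: (odd_double_half k); rewrite even_k -muln2; lia.
by rewrite qpochS Ek mulrC.
Qed.

Lemma rs_X_X2 n : rs n 'X ('X ^+ 2) = qpoch (- 'X) 'X n.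
Proof.
apply: (rs_eq_rec X2_lead_unit (u := qpoch (- 'X) 'X)) => [||k]; rewrite ?qpoch0 //.
  by rewrite qpochS qpoch0 expr0 !mul1r opprK.
by rewrite !qpochS exprAC !exprS; ring.
Qed.

Definition f_sum n m : {poly int} :=
  \sum_(j < m.+1) (-1) ^+ j * 'X ^+ (j ^ 2) * qbin ('X ^+ 2) m j
                   * qpoch ('X ^+ (n.+1 - j)) 'X j.

Definition f_term n m j : {poly int} :=
  (-1) ^+ j * 'X ^+ (j ^ 2) * qbinom ('X ^+ 2) m j * qpoch ('X ^+ (n.+1 - j)) 'X j.

Lemma f_sumE n m N : (m < N)%N -> f_sum n m = \sum_(j < N) f_term n m j.
Proof.
move=> ltmN; rewrite /f_sum (eq_bigr (fun j : 'I_m.+1 => f_term n m j)).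
  by apply: sum_ord_widen_vanish => // j ltmj; rewrite /f_term qbinom_gt // mulr0 mul0r.
by move=> j _; rewrite qbinE //; exact: X2_lead_unit.
Qed.

Lemma f_term0 n m : f_term n m 0 = 1.
Proof. by rewrite /f_term !expr0 qbinom_n0 qpoch0 !mulr1. Qed.

Lemma f_sum0n m : f_sum 0 m = 1.
Proof.
rewrite (f_sumE 0 (ltnSn m)) big_ord_recl f_term0 big1 ?addr0 // => j _.
by rewrite /f_term lift0 subSS sub0n expr0 qpoch1_eq0 mulr0.
Qed.

Lemma f_sum_n0 n : f_sum n 0 = 1.
Proof. by rewrite (f_sumE n (ltnSn 0)) big_ord1 f_term0. Qed.

Lemma f_sumS n m :
  f_sum n.+1 m.+1 = f_sum n.+1 m - 'X ^+ (2 * m + 1) * (1 - 'X ^+ n.+1) * f_sum n m.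
Proof.
rewrite (f_sumE n.+1 (ltnSn m.+1)) (f_sumE n.+1 (ltnW (ltnSn m.+1))) (f_sumE n (ltnSn m)).
rewrite !(big_ord_recl m.+1) !f_term0 mulr_sumr -addrA -sumrB; congr (_ + _).
apply: eq_bigr => j _.
rewrite lift0 /f_term (qbinom_dual_pascal X2_lead_unit) subSS qpoch_expS.
have Esq : 'X ^+ (j.+1 ^ 2) = 'X ^+ (j ^ 2) * 'X ^+ (2 * j + 1) :> {poly int}.
  by rewrite -exprD; congr (_ ^+ _); rewrite !expnS expn0 !muln1; lia.
have Em : 'X ^+ (2 * m + 1) = 'X ^+ (2 * j + 1) * ('X ^+ 2) ^+ (m - j) :> {poly int}.
  by rewrite -exprM -exprD; congr (_ ^+ _); have := ltn_ord j; lia.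
by rewrite Esq Em exprS; ring.
Qed.

Lemma rs_Xodd_X2 m n :
  rs n ('X ^+ (2 * m + 1)) ('X ^+ 2) = qpoch (- 'X) 'X n * f_sum n m.
Proof.
elim: m n => [|m IH] n; first by rewrite muln0 add0n expr1 rs_X_X2 f_sum_n0 mulr1.
case: n => [|n].
  by rewrite (rsE X2_lead_unit _ (ltnSn 0)) big_ord1 qbinom_n0 qpoch0 f_sum0n !mulr1.
have -> : 'X ^+ (2 * m.+1 + 1) = 'X ^+ 2 * 'X ^+ (2 * m + 1) :> {poly int}.
  by rewrite -exprD; congr (_ ^+ _); lia.
rewrite (rs_scale X2_lead_unit) !IH f_sumS qpochS -exprM.
have -> : 'X ^+ (2 * n.+1) = 'X ^+ n.+1 * 'X ^+ n.+1 :> {poly int}.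
  by rewrite -exprD; congr (_ ^+ _); lia.
by rewrite exprSr; ring.
Qed.

Definition F_even_sum n m : {poly int} :=
  \sum_(k < (m./2).+1) 'X ^+ 'C(2 * k, 2) * qbin 'X m (2 * k)
                        * qpoch ('X ^+ (2 * n + 2 - 2 * k)) ('X ^+ 2) k.

Definition F_odd_sum n m : {poly int} :=
  \sum_(k < (m.+1)./2) 'X ^+ 'C(2 * k + 1, 2) * qbin 'X m (2 * k + 1)
                        * qpoch ('X ^+ (2 * n + 2 - 2 * k)) ('X ^+ 2) k.

Definition F_even_term n m k : {poly int} :=
  'X ^+ 'C(2 * k, 2) * qbinom 'X m (2 * k) * qpoch (('X ^+ 2) ^+ (n.+1 - k)) ('X ^+ 2) k.

Definition F_odd_term n m k : {poly int} :=
  'X ^+ 'C(2 * k + 1, 2) * qbinom 'X m (2 * k + 1)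
    * qpoch (('X ^+ 2) ^+ (n.+1 - k)) ('X ^+ 2) k.

Lemma X_exp_double n k : 'X ^+ (2 * n + 2 - 2 * k) = ('X ^+ 2) ^+ (n.+1 - k) :> {poly int}.
Proof. by rewrite -exprM; congr (_ ^+ _); lia. Qed.

Lemma F_even_sumE n m N : (m < N)%N -> F_even_sum n m = \sum_(k < N) F_even_term n m k.
Proof.
move=> ltmN; have := odd_double_half m; rewrite -muln2 => Em.
rewrite /F_even_sum (eq_bigr (fun k : 'I_(m./2).+1 => F_even_term n m k)).
  apply: sum_ord_widen_vanish => [|k lek]; first lia.
  by rewrite /F_even_term qbinom_gt ?mulr0 ?mul0r //; lia.
by move=> k _; rewrite qbinE ?X_exp_double //; exact: X_lead_unit.
Qed.

Lemma F_odd_sumE n m N : (m < N)%N -> F_odd_sum n m = \sum_(k < N) F_odd_term n m k.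
Proof.
move=> ltmN; have := odd_double_half m.+1; rewrite -muln2 => Em.
rewrite /F_odd_sum (eq_bigr (fun k : 'I_(m.+1)./2 => F_odd_term n m k)).
  apply: sum_ord_widen_vanish => [|k lek]; first lia.
  by rewrite /F_odd_term qbinom_gt ?mulr0 ?mul0r //; lia.
by move=> k _; rewrite qbinE ?X_exp_double //; exact: X_lead_unit.
Qed.

Lemma F_even_term0 n m : F_even_term n m 0 = 1.
Proof. by rewrite /F_even_term muln0 qbinom_n0 qpoch0 bin0n expr0 !mulr1. Qed.

Lemma F_even_sum0n m : F_even_sum 0 m = 1.
Proof.
rewrite (F_even_sumE 0 (ltnSn m)) big_ord_recl F_even_term0 big1 ?addr0 // => k _.
by rewrite /F_even_term lift0 subSS sub0n expr0 qpoch1_eq0 mulr0.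
Qed.

Lemma F_even_sum_n0 n : F_even_sum n 0 = 1.
Proof. by rewrite (F_even_sumE n (ltnSn 0)) big_ord1 F_even_term0. Qed.

Lemma F_odd_sum_n0 n : F_odd_sum n 0 = 0.
Proof. by rewrite /F_odd_sum big_ord0. Qed.

Lemma F_odd_sumS n m : F_odd_sum n m.+1 = F_odd_sum n m + 'X ^+ m * F_even_sum n m.
Proof.
rewrite (F_odd_sumE n (ltnSn m.+1)) (F_odd_sumE n (ltnW (ltnSn m.+1))).
rewrite (F_even_sumE n (ltnW (ltnSn m.+1))) mulr_sumr -big_split /=.
apply: eq_bigr => k _; rewrite /F_odd_term /F_even_term addn1 (qbinom_dual_pascal X_lead_unit).
have [le_km | lt_mk] := leqP (2 * k) m; last by rewrite (qbinom_gt _ lt_mk); ring.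
have Em : 'X ^+ m = 'X ^+ (2 * k) * 'X ^+ (m - 2 * k) :> {poly int} by rewrite -exprD subnKC.
by rewrite binS bin1 exprD Em; ring.
Qed.

Lemma F_even_sumS n m :
  F_even_sum n.+1 m.+1 = F_even_sum n.+1 m + 'X ^+ m * (1 - ('X ^+ 2) ^+ n.+1) * F_odd_sum n m.
Proof.
rewrite (F_even_sumE n.+1 (ltnSn m.+1)) (F_even_sumE n.+1 (ltnW (ltnSn m.+1))).
rewrite (F_odd_sumE n (ltnSn m)) !(big_ord_recl m.+1) !F_even_term0 mulr_sumr.
rewrite -addrA -big_split /=.
congr (_ + _); apply: eq_bigr => k _; rewrite /F_even_term /F_odd_term.
have -> : (2 * k.+1 = (2 * k + 1).+1)%N by lia.
rewrite (qbinom_dual_pascal X_lead_unit) subSS qpoch_expS.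
have [le_km | lt_mk] := leqP (2 * k + 1) m; last by rewrite (qbinom_gt _ lt_mk); ring.
have Em : 'X ^+ m = 'X ^+ (2 * k + 1) * 'X ^+ (m - (2 * k + 1)) :> {poly int}.
  by rewrite -exprD subnKC.
by rewrite binS bin1 exprD Em; ring.
Qed.

Lemma rs_negXn_X m :
  (forall n, rs (2 * n) (- 'X ^+ m) 'X = qpoch 'X ('X ^+ 2) n * F_even_sum n m) /\
  (forall n, rs (2 * n + 1) (- 'X ^+ m) 'X = qpoch 'X ('X ^+ 2) n.+1 * F_odd_sum n m).
Proof.
elim: m => [|m [IHe IHo]].
  split=> n; rewrite expr0 ?F_even_sum_n0 ?F_odd_sum_n0 ?mulr1 ?mulr0 rs_neg1.
    by rewrite mul2n odd_double doubleK.
  by rewrite addn1 mul2n oddS odd_double.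
have EX : - 'X ^+ m.+1 = 'X * (- 'X ^+ m) :> {poly int} by rewrite exprS mulrN.
have rs_odd n : rs (2 * n + 1) (- 'X ^+ m.+1) 'X = qpoch 'X ('X ^+ 2) n.+1 * F_odd_sum n m.+1.
  rewrite EX addn1 (rs_scale X_lead_unit) -addn1 IHe IHo F_odd_sumS qpochS -exprM addn1.
  by rewrite -exprSr; ring.
split=> // -[|n].
  by rewrite muln0 (rsE X_lead_unit _ (ltnSn 0)) big_ord1 qbinom_n0 qpoch0 F_even_sum0n !mulr1.
have E2n : (2 * n.+1 = (2 * n + 1).+1)%N by lia.
by rewrite E2n EX (rs_scale X_lead_unit) -E2n IHe IHo F_even_sumS -exprM E2n; ring.
Qed.

Theorem corollary2p1 (m n : nat) :
  (exists g : {poly int},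
     rs n (- 'X ^+ m) 'X = qpoch 'X ('X ^+ 2) (n.+1)./2 * g)
  /\
  rs n ('X ^+ (2 * m + 1)) ('X ^+ 2)
    = qpoch (- 'X) 'X n *
      \sum_(j < m.+1) (-1) ^+ j * 'X ^+ (j ^ 2) * qbin ('X ^+ 2) m j
                       * qpoch ('X ^+ (n.+1 - j)) 'X j
  /\
  rs (2 * n) (- 'X ^+ m) 'X
    = qpoch 'X ('X ^+ 2) ((2 * n).+1)./2 *
      \sum_(k < (m./2).+1) 'X ^+ 'C(2 * k, 2) * qbin 'X m (2 * k)
                            * qpoch ('X ^+ (2 * n + 2 - 2 * k)) ('X ^+ 2) k
  /\
  rs (2 * n + 1) (- 'X ^+ m) 'X
    = qpoch 'X ('X ^+ 2) ((2 * n + 1).+1)./2 *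
      \sum_(k < (m.+1)./2) 'X ^+ 'C(2 * k + 1, 2) * qbin 'X m (2 * k + 1)
                            * qpoch ('X ^+ (2 * n + 2 - 2 * k)) ('X ^+ 2) k.
Proof.
have half_even k : ((2 * k).+1)./2 = k by rewrite mul2n -[_./2]/(uphalf _) uphalf_double.
have half_odd k : ((2 * k + 1).+1)./2 = k.+1 by rewrite addn1 mul2n /= doubleK.
have [rs_even rs_odd] := rs_negXn_X m.
split; last by rewrite rs_Xodd_X2 half_even rs_even half_odd rs_odd.
have [[k ->] | [k ->]] : (exists k, n = 2 * k)%N \/ (exists k, n = 2 * k + 1)%N.
  have := odd_double_half n; rewrite -muln2.
  by case: (odd n) => En; [right | left]; exists n./2; lia.
- by exists (F_even_sum k m); rewrite rs_even half_even.
- by exists (F_odd_sum k m); rewrite rs_odd half_odd.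
Qed.
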